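(* Let $f:\mathbb{R}_+^n\to\mathbb{R}$. Then $f$ is supermodular if and only if for all $x,y,z\in\mathbb{R}_+^n$ with $y\wedge z=0$ one has $f(x\vee y\vee z)+f(x)\ge f(x\vee y)+f(x\vee z)$.
   Context: For $x,y\in\mathbb{R}_+^n$, $x\vee y$ and $x\wedge y$ denote the componentwise maximum and minimum. A function $f:\mathbb{R}_+^n\to\mathbb{R}$ is supermodular if $f(x\vee y)+f(x\wedge y)\ge f(x)+f(y)$ for all $x,y\in\mathbb{R}_+^n$. *)

From mathcomp Require Import all_boot all_order all_algebra.
From mathcomp Require Import reals.
Set Implicit Arguments. Unset Strict Implicit. Unset Printing Implicit Defensive.
Import Order.TTheory GRing.Theory Num.Theory.
Local Open Scope ring_scope.

(* Points of R_+^n are row vectors 'rV[R]_n with nonnegative entries. *)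
Definition nonneg_vec (R : realType) (n : nat) (x : 'rV[R]_n) : Prop :=
  forall i : 'I_n, 0 <= x 0 i.

Definition vjoin (R : realType) (n : nat) (x y : 'rV[R]_n) : 'rV[R]_n :=
  \row_i Num.max (x 0 i) (y 0 i).
Definition vmeet (R : realType) (n : nat) (x y : 'rV[R]_n) : 'rV[R]_n :=
  \row_i Num.min (x 0 i) (y 0 i).

(* f : R_+^n -> R (represented on all of R^n; only values on R_+^n matter) *)
Definition supermodular (R : realType) (n : nat) (f : 'rV[R]_n -> R) : Prop :=
  forall x y : 'rV[R]_n, nonneg_vec x -> nonneg_vec y ->
    f (vjoin x y) + f (vmeet x y) >= f x + f y.

From mathcomp Require Import all_boot all_order all_algebra.
From mathcomp Require Import reals.
Set Implicit Arguments. Unset Strict Implicit. Unset Printing Implicit Defensive.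
Import Order.TTheory GRing.Theory Num.Theory.
Local Open Scope ring_scope.

(* Supermodularity applied to x \/ y and x \/ z gives the condition, because
   (x \/ y) /\ (x \/ z) = x \/ (y /\ z) = x \/ 0 = x on R_+^n.  Conversely,
   split x and y over m = x /\ y: let y' (resp. z') keep the entries where x
   exceeds y (resp. y exceeds x) and vanish elsewhere.  Then y' /\ z' = 0,
   m \/ y' = x, m \/ z' = y and x \/ z' = x \/ y, so the condition at
   (m, y', z') is the supermodular inequality for x and y. *)

Definition vexcess (R : realType) (n : nat) (x y : 'rV[R]_n) : 'rV[R]_n :=
  \row_i (if y 0 i < x 0 i then x 0 i else 0).

Section JoinMeet.
Variables (R : realType) (n : nat).
Implicit Types x y z : 'rV[R]_n.

Lemma vjoinA : associative (@vjoin R n).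
Proof. by move=> x y z; apply/rowP => i; rewrite !mxE maxA. Qed.

Lemma vjoinACA : interchange (@vjoin R n) (@vjoin R n).
Proof. by move=> x y z t; apply/rowP => i; rewrite !mxE maxACA. Qed.

Lemma vjoinxx : idempotent_op (@vjoin R n).
Proof. by move=> x; apply/rowP => i; rewrite !mxE maxxx. Qed.

Lemma vmeetC : commutative (@vmeet R n).
Proof. by move=> x y; apply/rowP => i; rewrite !mxE minC. Qed.

Lemma vjoin_meetr : right_distributive (@vjoin R n) (@vmeet R n).
Proof. by move=> x y z; apply/rowP => i; rewrite !mxE max_minr. Qed.

Lemma vjoinx0 x : nonneg_vec x -> vjoin x 0 = x.
Proof. by move=> hx; apply/rowP => i; rewrite !mxE max_l. Qed.

Lemma vjoin_nonneg x y : nonneg_vec x -> nonneg_vec (vjoin x y).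
Proof. by move=> hx i; rewrite mxE le_max hx. Qed.

Lemma vmeet_nonneg x y : nonneg_vec x -> nonneg_vec y -> nonneg_vec (vmeet x y).
Proof. by move=> hx hy i; rewrite mxE le_min hx hy. Qed.

Lemma vexcess_nonneg x y : nonneg_vec x -> nonneg_vec (vexcess x y).
Proof. by move=> hx i; rewrite mxE; case: ifP. Qed.

Lemma vmeet_excess x y :
  nonneg_vec x -> nonneg_vec y -> vmeet (vexcess x y) (vexcess y x) = 0.
Proof.
move=> hx hy; apply/rowP => i; rewrite !mxE.
by case: ltgtP => _; [exact: min_r | exact: min_l | exact: minxx].
Qed.

Lemma vjoin_meet_excess x y : nonneg_vec x -> vjoin (vmeet x y) (vexcess x y) = x.
Proof.
move=> hx; apply/rowP => i; rewrite !mxE.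
by case: ltP => [yx | _]; [exact/max_r/ltW | exact: max_l].
Qed.

Lemma vjoin_meet_excessr x y : nonneg_vec y -> vjoin (vmeet x y) (vexcess y x) = y.
Proof. by rewrite vmeetC; apply: vjoin_meet_excess. Qed.

Lemma vjoin_excess x y : nonneg_vec x -> vjoin x (vexcess y x) = vjoin x y.
Proof.
move=> hx; apply/rowP => i; rewrite !mxE.
by case: ltP => [xy | _]; [exact/max_r/ltW | exact: max_l].
Qed.

End JoinMeet.

Theorem lemma3p4 (R : realType) (n : nat) (f : 'rV[R]_n -> R) :
  supermodular f <->
  (forall x y z : 'rV[R]_n, nonneg_vec x -> nonneg_vec y -> nonneg_vec z ->
     vmeet y z = 0 ->
     f (vjoin (vjoin x y) z) + f x >= f (vjoin x y) + f (vjoin x z)).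
Proof.
split => [super x y z hx _ _ yz0 | cond x y hx hy].
  have := super _ _ (vjoin_nonneg y hx) (vjoin_nonneg z hx).
  by rewrite vjoinACA vjoinxx vjoinA -vjoin_meetr yz0 vjoinx0.
have := cond _ _ _ (vmeet_nonneg hx hy) (vexcess_nonneg y hx)
  (vexcess_nonneg x hy) (vmeet_excess hx hy).
by rewrite vjoin_meet_excess // vjoin_meet_excessr // vjoin_excess.
Qed.
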